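(* Let $K\ge1$, $n\ge1$. Let $y_1,\dots,y_n$ be data and let $p^p_1,\dots,p^p_K$ be the predictive densities obtained by fitting $K$ models to these data; let $\tilde y_1,\dots,\tilde y_n$ be i.i.d. new draws from the data-generating distribution $Q$, with $y\sim Q$ a generic draw and $\mathrm{E}$ the expectation under $Q$ (with the fitted densities held fixed). Define the optimism $op_k=-\sum_i\log p^p_k(\tilde y_i)+\sum_i\log p^p_k(y_i)$, the weights $w^{op}_k=e^{-op_k}/\sum_j e^{-op_j}$, the overfitting ratios $m_k=\frac{\sum_i-\log p^p_k(\tilde y_i)}{\sum_i-\log p^p_k(y_i)}$ and $m=\min_k m_k$, and $$\phi_{term}=\log\frac1K\sum_k\mathrm{E}\Big[e^{\sum_i\log p^p_k(\tilde y_i)-n\mathrm{E}[\log p^p_k(y)]}\Big].$$ Assume $\sum_i-\log p^p_k(y_i)>0$ for each $k$ and $m>1$. Then for any $\delta\in(0,1]$, with probability at least $1-\delta$, simultaneously for all $w^p\in S^K$: $$n\,\mathrm{E}\Big[-\log\sum_kw^p_kp^p_k(y)\Big]\le\frac{m}{m-1}\sum_kw^p_k\log\frac{w^p_k}{w^{op}_k}-\frac{1}{m-1}\sum_kw^p_k\log w^p_k+\log K-\frac{m}{m-1}\log\sum_ke^{-op_k}-\log\delta+\phi_{term}.$$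
   Context: $S^K$ is the set of probability vectors with $K$ components; $0\log 0=0$. *)

From HB Require Import structures.
From mathcomp Require Import all_boot all_order all_algebra.
From mathcomp Require Import all_classical all_reals all_analysis.
Set Implicit Arguments. Unset Strict Implicit. Unset Printing Implicit Defensive.
Import Order.TTheory GRing.Theory Num.Theory.
Local Open Scope ring_scope.
Local Open Scope classical_set_scope.

Section Defs.
Context {R : realType}.

Definition simplex (K : nat) (w : 'I_K -> R) : Prop :=
  (forall k, 0 <= w k) /\ \sum_(k < K) w k = 1.

(* minimum of a family indexed by 'I_K (0 if K = 0; only used for K >= 1) *)
Definition min_ord (K : nat) (f : 'I_K -> R) : R :=
  match K return ('I_K -> R) -> R with
  | 0 => fun _ => 0
  | K'.+1 => fun f => \big[Num.min/ f ord0]_(k < K'.+1) f k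
  end f.

Definition distributed_as d d' (Om : measurableType d) (Y : measurableType d')
  (P : probability Om R) (X : Om -> Y) (Q : probability Y R) : Prop :=
  forall B, measurable B -> P (X @^-1` B) = Q B.

Definition mutually_independent d d' (Om : measurableType d) (Y : measurableType d')
  (P : probability Om R) (n : nat) (X : 'I_n -> Om -> Y) : Prop :=
  forall B : 'I_n -> set Y, (forall i, measurable (B i)) ->
    P (\bigcap_(i in [set: 'I_n]) (X i @^-1` B i)) =
    (\prod_(i < n) P (X i @^-1` B i))%E.

Definition train_loss d (Y : measurableType d) (n K : nat)
  (p : 'I_K -> Y -> R) (y : 'I_n -> Y) (k : 'I_K) : R :=
  \sum_(i < n) - ln (p k (y i)).

Definition test_loss d (Y : measurableType d) (n K : nat)
  (p : 'I_K -> Y -> R) (yt : 'I_n -> Y) (k : 'I_K) : R :=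
  \sum_(i < n) - ln (p k (yt i)).

Definition optimism d (Y : measurableType d) (n K : nat)
  (p : 'I_K -> Y -> R) (y yt : 'I_n -> Y) (k : 'I_K) : R :=
  test_loss p yt k - train_loss p y k.

Definition w_op d (Y : measurableType d) (n K : nat)
  (p : 'I_K -> Y -> R) (y yt : 'I_n -> Y) (k : 'I_K) : R :=
  expR (- optimism p y yt k) / \sum_(j < K) expR (- optimism p y yt j).

Definition m_ratio d (Y : measurableType d) (n K : nat)
  (p : 'I_K -> Y -> R) (y yt : 'I_n -> Y) (k : 'I_K) : R :=
  test_loss p yt k / train_loss p y k.

Definition m_min d (Y : measurableType d) (n K : nat)
  (p : 'I_K -> Y -> R) (y yt : 'I_n -> Y) : R :=
  min_ord (m_ratio p y yt).

(* phi_term = log (1/K) sum_k E[ exp( sum_i log p_k(~y_i) - n E[log p_k(y)] ) ],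
   as an extended real (it is +oo if an expectation is infinite). *)
Definition phi_term d d' (Om : measurableType d) (Y : measurableType d')
  (P : probability Om R) (Q : probability Y R) (n K : nat)
  (p : 'I_K -> Y -> R) (Yt : 'I_n -> Om -> Y) : \bar R :=
  lne ((K%:R^-1)%:E *
    \sum_(k < K) \int[P]_om
       (expR (\sum_(i < n) ln (p k (Yt i om))
              - n%:R * fine (\int[Q]_z (ln (p k z))%:E)))%:E)%E.

End Defs.

(* Jensen's inequality for the concave ln gives
   n E[-ln sum_k w_k p_k] <= - sum_k w_k c_k  with  c_k = n E[ln p_k].
   The Gibbs variational inequality
   sum_k w_k a_k - sum_k w_k ln w_k <= ln sum_k e^{a_k}, applied to
   a_k = - test_k - c_k = sum_i ln p_k(~y_i) - n E[ln p_k], bounds the right-hand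
   side by sum_k w_k test_k + sum_k w_k ln w_k + ln sum_k e^{a_k}.  Markov's
   inequality bounds ln sum_k e^{a_k} by ln K + phi_term - ln delta on an event of
   probability at least 1 - delta that depends neither on w nor on m.  Finally
   m train_k <= test_k gives sum_k w_k test_k <= m/(m-1) sum_k w_k op_k, and
   sum_k w_k (ln w_k + op_k) + ln sum_k e^{-op_k} is the relative entropy of w
   to w^op. *)

From HB Require Import structures.
From mathcomp Require Import all_boot all_order all_algebra.
From mathcomp Require Import all_classical all_reals all_analysis.
From mathcomp Require Import ring lra measurable_realfun.
Set Implicit Arguments.
Unset Strict Implicit.
Unset Printing Implicit Defensive.
Import Order.TTheory GRing.Theory Num.Theory.
Local Open Scope ring_scope.
Local Open Scope classical_set_scope.

Section simplex_inequalities.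
Variable R : realType.

Lemma sumr_expR_gt0 K (k0 : 'I_K) (a : 'I_K -> R) : 0 < \sum_(k < K) expR (a k).
Proof.
rewrite (bigD1 k0) //= ltr_wpDr ?expR_gt0 //.
by apply: sumr_ge0 => k _; rewrite ltW // expR_gt0.
Qed.

Lemma simplex_ex_gt0 K (w : 'I_K -> R) : simplex w -> exists k, 0 < w k.
Proof.
move=> [w0 w1].
have : \sum_(k < K) w k != 0 by rewrite w1 oner_eq0.
by rewrite psumr_neq0 => [/hasP [k _ wk]|k _]; [exists k | exact: w0].
Qed.

Lemma simplex_sum_mul_gt0 K (w b : 'I_K -> R) :
  simplex w -> (forall k, 0 < w k -> 0 < b k) -> 0 < \sum_(k < K) w k * b k.
Proof.
move=> ws b0; have [k wk] := simplex_ex_gt0 ws.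
have wb0 j : 0 <= w j * b j.
  have [->|wj] := eqVneq (w j) 0; first by rewrite mul0r.
  have wj0 : 0 < w j by rewrite lt0r wj ws.1.
  by rewrite mulr_ge0 // ltW // b0.
rewrite (bigD1 k) //= ltr_wpDr ?mulr_gt0 ?b0 //.
exact: sumr_ge0.
Qed.

Lemma mulr_ln_le (c x : R) : 0 <= c -> 0 < x -> c * ln x <= c * x - c.
Proof.
move=> c0 x0; rewrite -[c in _ - c]mulr1 -mulrBr ler_wpM2l //.
have := @le_ln1Dx R (x - 1); rewrite addrCA subrr addr0; apply; lra.
Qed.

Lemma jensen_ln K (w b : 'I_K -> R) : simplex w -> (forall k, 0 < w k -> 0 < b k) ->
  \sum_(k < K) w k * ln (b k) <= ln (\sum_(k < K) w k * b k).
Proof.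
move=> ws b0; have M0 := simplex_sum_mul_gt0 ws b0.
set M := \sum_(k < K) w k * b k in M0 *; have [w0 w1] := ws.
rewrite -subr_le0 -[ln M]mul1r -w1 mulr_suml -sumrB.
apply: (@le_trans _ _ (\sum_(k < K) (w k * (b k / M) - w k))).
  apply: ler_sum => k _; rewrite -mulrBr.
  have [->|wk] := eqVneq (w k) 0; first by rewrite !mul0r subr0.
  have wk0 : 0 < w k by rewrite lt0r wk w0.
  by rewrite -ln_div ?posrE ?b0 //; apply: mulr_ln_le; rewrite ?divr_gt0 ?b0.
rewrite sumrB w1; under eq_bigr do rewrite mulrA.
by rewrite -mulr_suml divff ?gt_eqF // subrr.
Qed.

Lemma gibbs_variational K (w a : 'I_K -> R) : simplex w ->
  \sum_(k < K) w k * a k - \sum_(k < K) w k * ln (w k) <= ln (\sum_(k < K) expR (a k)).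
Proof.
move=> ws; have [k0 _] := simplex_ex_gt0 ws.
pose b k := expR (a k) / w k.
have b0 k : 0 < w k -> 0 < b k by move=> wk; rewrite divr_gt0 ?expR_gt0.
have -> : \sum_(k < K) w k * a k - \sum_(k < K) w k * ln (w k) =
          \sum_(k < K) w k * ln (b k).
  rewrite -sumrB; apply: eq_bigr => k _.
  have [->|wk] := eqVneq (w k) 0; first by rewrite !mul0r subr0.
  have wk0 : 0 < w k by rewrite lt0r wk ws.1.
  by rewrite ln_div ?posrE ?expR_gt0 // expRK mulrBr.
apply: (le_trans (jensen_ln ws b0)).
rewrite ler_ln ?posrE ?(simplex_sum_mul_gt0 ws b0) ?(sumr_expR_gt0 k0) //.
apply: ler_sum => k _; have [->|wk] := eqVneq (w k) 0.
  by rewrite mul0r ltW ?expR_gt0.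
by rewrite mulrCA mulfV // mulr1.
Qed.

Lemma sum_mul_ln_div_softmax K (w o : 'I_K -> R) : simplex w ->
  let Z := \sum_(j < K) expR (- o j) in
  \sum_(k < K) w k * ln (w k / (expR (- o k) / Z)) =
  \sum_(k < K) w k * ln (w k) + \sum_(k < K) w k * o k + ln Z.
Proof.
move=> ws Z; have [k0 _] := simplex_ex_gt0 ws.
have Z0 : 0 < Z := sumr_expR_gt0 k0 _.
rewrite -[ln Z]mul1r -ws.2 mulr_suml -!big_split /=.
apply: eq_bigr => k _.
have [->|wk] := eqVneq (w k) 0; first by rewrite !mul0r !addr0.
have wk0 : 0 < w k by rewrite lt0r wk ws.1.
rewrite ln_div ?posrE ?divr_gt0 ?expR_gt0 // ln_div ?posrE ?expR_gt0 // expRK.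
ring.
Qed.

Lemma overfitting_bound K (w T S c : 'I_K -> R) (m : R) :
  simplex w -> 1 < m -> (forall k, m * S k <= T k) ->
  - \sum_(k < K) w k * c k <=
    m / (m - 1) * (\sum_(k < K) w k *
       ln (w k / (expR (- (T k - S k)) / \sum_(j < K) expR (- (T j - S j)))))
    - (m - 1)^-1 * (\sum_(k < K) w k * ln (w k))
    - m / (m - 1) * ln (\sum_(j < K) expR (- (T j - S j)))
    + ln (\sum_(k < K) expR (- T k - c k)).
Proof.
move=> ws m1 mST; rewrite sum_mul_ln_div_softmax //.
have := gibbs_variational (fun k => - T k - c k) ws.
have -> : \sum_(k < K) w k * (- T k - c k) =
          - \sum_(k < K) w k * T k - \sum_(k < K) w k * c k.
  rewrite (eq_bigr (fun k => - (w k * T k) - w k * c k)) => [|k _]; last by ring.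
  by rewrite big_split /= !sumrN.
have -> : \sum_(k < K) w k * (T k - S k) =
          \sum_(k < K) w k * T k - \sum_(k < K) w k * S k.
  by rewrite -sumrB; apply: eq_bigr => k _; ring.
have mST_avg : m * \sum_(k < K) w k * S k <= \sum_(k < K) w k * T k.
  rewrite mulr_sumr; apply: ler_sum => k _.
  by rewrite mulrCA ler_wpM2l ?ws.1.
set q := (m - 1)^-1.
have q0 : 0 < q by rewrite invr_gt0 subr_gt0.
have mq : m / (m - 1) = 1 + q by rewrite /q; field; rewrite subr_eq0 gt_eqF.
rewrite mq.
set D := \sum_(k < K) w k * T k in mST_avg *.
set E := \sum_(k < K) w k * S k in mST_avg *.
have qm : q * m = 1 + q by rewrite mulrC -mq.
have qmE : q * (m * E) = E + q * E by rewrite mulrA qm mulrDl mul1r.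
have : 0 <= q * (D - m * E) by rewrite mulr_ge0 ?subr_ge0 // ltW.
rewrite mulrBr qmE; lra.
Qed.

Lemma min_ord_le K (f : 'I_K -> R) k : min_ord f <= f k.
Proof. by case: K f k => [|K] f k; [case: k | exact: bigmin_le]. Qed.

End simplex_inequalities.

Section integral_inequalities.
Context d (T : measurableType d) (R : realType).
Local Open Scope ereal_scope.

Lemma le_integral_measurable (mu : {measure set T -> \bar R}) (D : set T)
    (f g : T -> \bar R) :
  measurable D -> measurable_fun D f -> measurable_fun D g ->
  {in D, forall x, f x <= g x} ->
  \int[mu]_(x in D) f x <= \int[mu]_(x in D) g x.
Proof.
move=> mD mf mg fg; rewrite integralE [leRHS]integralE leeB //.
- apply: ge0_le_integral => //; try exact: measurable_funepos.
  by move=> x Dx; apply: funepos_le fg _ (mem_set Dx).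
- apply: ge0_le_integral => //; try exact: measurable_funeneg.
  by move=> x Dx; apply: funeneg_le fg _ (mem_set Dx).
Qed.

Lemma integral_gt0 (mu : {measure set T -> \bar R}) (f : T -> R) :
  0 < mu [set: T] -> measurable_fun [set: T] f -> (forall x, (0 < f x)%R) ->
  0 < \int[mu]_x (f x)%:E.
Proof.
move=> muT mf f0; rewrite lt0e integral_ge0 ?andbT => [|x _]; last first.
  by rewrite lee_fin ltW.
apply/eqP => If0.
have mEf : measurable_fun [set: T] (fun x => (f x)%:E) by apply/measurable_EFinP.
have /ae_eq_integral_abs : \int[mu]_(x in [set: T]) `|(f x)%:E| = 0.
  by under eq_integral do rewrite gee0_abs ?lee_fin ?ltW //.
move=> /(_ measurableT mEf) [N [mN muN0 fN]].
have NT : N = [set: T].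
  apply/seteqP; split => // x _; apply: fN => /(_ I) [] /eqP.
  by rewrite gt_eqF.
by move: muT; rewrite -NT muN0 ltxx.
Qed.

Lemma markov_compl (P : probability T R) (f : T -> R) (r delta : R) :
  measurable_fun [set: T] f -> (forall x, 0 <= f x)%R ->
  \int[P]_x (f x)%:E = r%:E -> (0 < r)%R -> (0 < delta)%R ->
  (1 - delta)%:E <= P [set x | f x <= r / delta]%R.
Proof.
move=> mf f0 fr r0 delta0; set t := (r / delta)%R.
have t0 : (0 < t)%R by rewrite divr_gt0.
have mEf : measurable_fun [set: T] (fun x => (f x)%:E) by apply/measurable_EFinP.
have mA : measurable [set x | f x <= t]%R.
  by rewrite -[X in measurable X]setTI; apply: measurable_fun_le.
have PC : P [set x | t <= f x]%R <= delta%:E.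
  have := le_integral_abse P measurableT mEf t0.
  have -> : [set: T] `&` [set x | t%:E <= `|(f x)%:E|] = [set x | t <= f x]%R.
    by apply/seteqP; split => x /=; rewrite ger0_norm // lee_fin; case.
  rewrite (eq_integral (fun x => (f x)%:E)) => [|x _]; last first.
    by rewrite gee0_abs ?lee_fin.
  by rewrite fr -lee_pdivlMl // -EFinM /t invf_div divfK ?gt_eqF.
have mC : measurable [set x | t <= f x]%R.
  by rewrite -[X in measurable X]setTI; apply: measurable_fun_le.
have PnA : P (~` [set x | f x <= t]%R) <= delta%:E.
  apply: le_trans PC; apply: le_measure; rewrite ?inE.
  - exact: measurableC.
  - exact: mC.
  - by move=> x /= /negP; rewrite -ltNge => /ltW.
by move: PnA; rewrite probability_setC // leeBlDr ?fin_num_measure // EFinB leeBlDl.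
Qed.

Lemma ln_markov (P : probability T R) (f : T -> R) (delta : R) :
  measurable_fun [set: T] f -> (forall x, 0 < f x)%R -> (0 < delta)%R ->
  exists A, measurable A /\ (1 - delta)%:E <= P A /\
    forall x, A x -> (ln (f x) + ln delta)%:E <= lne (\int[P]_x (f x)%:E).
Proof.
move=> mf f0 delta0.
have [foo|ffin] := eqVneq (\int[P]_x (f x)%:E) +oo.
  exists setT; split => //; split; first by rewrite probability_setT lee_fin; lra.
  by move=> x _; rewrite foo leey.
have : 0 < \int[P]_x (f x)%:E.
  by apply: integral_gt0 => //; rewrite [X in 0 < X]probability_setT lte01.
set r := fine (\int[P]_x (f x)%:E) => If0.
have fr : \int[P]_x (f x)%:E = r%:E by rewrite fineK // ge0_fin_numE ?ltey // ltW.
have r0 : (0 < r)%R by rewrite -lte_fin -fr.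
exists [set x | f x <= r / delta]%R; split.
  by rewrite -[X in measurable X]setTI; apply: measurable_fun_le.
split; first by apply: markov_compl => // x; exact: ltW.
move=> x /= fx; rewrite fr lne_EFin // lee_fin -lnM ?posrE //.
by rewrite ler_ln ?posrE ?mulr_gt0 // -ler_pdivlMr.
Qed.

End integral_inequalities.

Lemma phi_termE d d' (Om : measurableType d) (Y : measurableType d') (R : realType)
    (P : probability Om R) (Q : probability Y R) n K
    (p : 'I_K -> Y -> R) (Yt : 'I_n -> Om -> Y) :
  (forall k, measurable_fun [set: Y] (p k)) ->
  (forall i, measurable_fun [set: Om] (Yt i)) ->
  phi_term P Q p Yt = lne ((K%:R^-1)%:E * \int[P]_om
    (\sum_(k < K) expR (\sum_(i < n) ln (p k (Yt i om))
                        - n%:R * fine (\int[Q]_z (ln (p k z))%:E)))%:E)%E.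
Proof.
move=> p_meas Yt_meas; rewrite /phi_term; congr (lne (_ * _))%E.
under [RHS]eq_integral do rewrite -sumEFin.
rewrite ge0_integral_sum // => k; apply/measurable_EFinP.
apply: measurableT_comp => //; apply: measurable_funB => //.
apply: measurable_sum => i.
exact: measurableT_comp (measurableT_comp (p_meas k) (Yt_meas i)).
Qed.

Lemma integral_neg_ln_mixture_le d (Y : measurableType d) (R : realType)
    (mu : {measure set Y -> \bar R}) K (p : 'I_K -> Y -> R) (w : 'I_K -> R) :
  (forall k, measurable_fun [set: Y] (p k)) -> (forall k z, 0 < p k z) ->
  (forall k, mu.-integrable [set: Y] (fun z => (ln (p k z))%:E)) -> simplex w ->
  (\int[mu]_z (- ln (\sum_(k < K) w k * p k z))%:E <=
   (- \sum_(k < K) w k * fine (\int[mu]_z (ln (p k z))%:E))%:E)%E.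
Proof.
move=> p_meas p_pos lnp_int ws.
have mlnp k : measurable_fun [set: Y] (fun z => ln (p k z)).
  exact: measurableT_comp (p_meas k).
have mix_le z : ((- ln (\sum_(k < K) w k * p k z))%:E <=
                 (\sum_(k < K) (- w k) * ln (p k z))%:E)%E.
  rewrite lee_fin; under [X in _ <= X]eq_bigr do rewrite mulNr.
  by rewrite sumrN lerN2; apply: jensen_ln => // k _; exact: p_pos.
apply: le_trans (le_integral_measurable mu measurableT _ _ (fun z _ => mix_le z)) _.
- apply/measurable_EFinP; apply: measurableT_comp => //.
  apply: measurableT_comp => //; apply: measurable_sum => k.
  exact: measurable_funM.
- apply/measurable_EFinP; apply: measurable_sum => k; exact: measurable_funM.
under eq_integral do rewrite -sumEFin.
rewrite integral_sum // => [|k]; last first.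
  by under eq_fun do rewrite EFinM; exact: integrableZl.
rewrite -sumrN -sumEFin lee_sum // => k _.
under eq_integral do rewrite EFinM.
rewrite integralZl // -[(\int[mu]_z (ln (p k z))%:E)%E]fineK ?integrable_fin_num //.
by rewrite -EFinM mulNr.
Qed.

Theorem theorem3p4 (R : realType)
  (d1 d2 : measure_display) (Om : measurableType d1) (Y : measurableType d2)
  (P : probability Om R) (Q : probability Y R)
  (mu : {measure set Y -> \bar R})
  (K n : nat) (hK : (1 <= K)%N) (hn : (1 <= n)%N)
  (y : 'I_n -> Y) (p : 'I_K -> Y -> R) (Yt : 'I_n -> Om -> Y)
  (p_meas : forall k, measurable_fun setT (p k))
  (p_pos : forall k z, 0 < p k z)
  (p_dens : forall k, (\int[mu]_z (p k z)%:E = 1)%E)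
  (lnp_int : forall k, Q.-integrable setT (fun z => (ln (p k z))%:E))
  (Yt_meas : forall i, measurable_fun setT (Yt i))
  (Yt_law : forall i, distributed_as P (Yt i) Q)
  (Yt_indep : mutually_independent P Yt)
  (train_pos : forall k, 0 < train_loss p y k)
  (delta : R) (hdelta : 0 < delta <= 1) :
  exists A : set Om, measurable A /\ ((1 - delta)%:E <= P A)%E /\
    forall om, A om ->
      let yt := fun i => Yt i om in
      let m := m_min p y yt in
      1 < m ->
      forall w : 'I_K -> R, simplex w ->
        ((n%:R)%:E * \int[Q]_z (- ln (\sum_(k < K) w k * p k z))%:E
         <= (m / (m - 1) * (\sum_(k < K) w k * ln (w k / w_op p y yt k))
             - (m - 1)^-1 * (\sum_(k < K) w k * ln (w k))
             + ln K%:R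
             - m / (m - 1) * ln (\sum_(k < K) expR (- optimism p y yt k))
             - ln delta)%:E
            + phi_term P Q p Yt)%E.
Proof.
have /andP[delta0 _] := hdelta.
set ell := fun k => fine (\int[Q]_z (ln (p k z))%:E).
pose S om := \sum_(k < K) expR (\sum_(i < n) ln (p k (Yt i om)) - n%:R * ell k).
have mS : measurable_fun [set: Om] S.
  apply: measurable_sum => k; apply: measurableT_comp => //.
  apply: measurable_funB => //; apply: measurable_sum => i.
  exact: measurableT_comp (measurableT_comp (p_meas k) (Yt_meas i)).
have S_gt0 om : 0 < S om := sumr_expR_gt0 (Ordinal hK) _.
have phiE : phi_term P Q p Yt = ((- ln K%:R)%:E + lne (\int[P]_om (S om)%:E))%E.
  have IS_gt0 : (0 < \int[P]_om (S om)%:E)%E.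
    by apply: integral_gt0 => //; rewrite [X in (0 < X)%E]probability_setT lte01.
  rewrite phi_termE // lneM.
  - by rewrite lne_EFin ?invr_gt0 ?ltr0n // lnV ?posrE ?ltr0n.
  - by rewrite in_itv /= leey andbT lte_fin invr_gt0 ltr0n.
  - by rewrite in_itv /= IS_gt0 leey.
have [A [mA [PA lnS_le]]] := ln_markov P mS S_gt0 delta0.
exists A; split => //; split => // om Aom yt m m1 w ws.
have mST k : m * train_loss p y k <= test_loss p yt k.
  by rewrite -ler_pdivlMr //; exact: min_ord_le.
have SE : S om = \sum_(k < K) expR (- test_loss p yt k - n%:R * ell k).
  by apply: eq_bigr => k _; rewrite /test_loss sumrN opprK.
have := overfitting_bound (fun k => n%:R * ell k) ws m1 mST.
rewrite /w_op /optimism -SE => bound.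
apply: le_trans (lee_wpmul2l _ (integral_neg_ln_mixture_le p_meas p_pos lnp_int ws)) _.
  by rewrite lee_fin.
rewrite phiE; apply: le_trans (leeD2l _ (leeD2l _ (lnS_le om Aom))).
rewrite -!EFinD -EFinM lee_fin mulrN mulr_sumr.
under eq_bigr do rewrite mulrCA.
lra.
Qed.
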